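(* Let $X,Z$ be complex Banach spaces, $E\in L(X,Z)$, $A\colon\mathrm{dom}(A)\subseteq X\to Z$ closed and densely defined, and assume $(E,A)$ has a complex resolvent index $p_{\mathrm{res}}^{(E,A)}$; set $p:=p_{\mathrm{res}}^{(E,A)}+1$. Fix $\mu\in\rho(E,A)$ and let $X_{\ker}:=\ker R_r(\mu)^p$, $Z_{\ker}:=\ker R_l(\mu)^p$. Then the operator $A_{\ker}\colon\mathrm{dom}(A_{\ker})\subseteq X_{\ker}\to Z_{\ker}$, $x\mapsto Ax$, with $\mathrm{dom}(A_{\ker}):=\mathrm{dom}(A)\cap X_{\ker}$, is well defined and has a bounded inverse $A_{\ker}^{-1}\colon Z_{\ker}\to X_{\ker}$. Furthermore, with $E_{\ker}:=E|_{X_{\ker}}\in L(X_{\ker},Z_{\ker})$, the operators $E_{\ker}A_{\ker}^{-1}\in L(Z_{\ker})$ and $A_{\ker}^{-1}E_{\ker}\in L(X_{\ker})$ are nilpotent of degree not exceeding $p$.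
   Context: $\rho(E,A)$ is the set of $\lambda\in\mathbb C$ for which $\lambda E-A\colon\mathrm{dom}(A)\to Z$ is bijective with bounded inverse. $(E,A)$ has a complex resolvent index if there is a smallest $p_{\mathrm{res}}^{(E,A)}\in\mathbb N_0$ for which there exist $\omega\in\mathbb R$, $C>0$ with $\{\operatorname{Re}\lambda>\omega\}\subseteq\rho(E,A)$ and $\|(\lambda E-A)^{-1}\|\le C|\lambda|^{p_{\mathrm{res}}^{(E,A)}-1}$ for $\operatorname{Re}\lambda>\omega$. $R_r(\lambda):=(\lambda E-A)^{-1}E\in L(X)$, $R_l(\lambda):=E(\lambda E-A)^{-1}\in L(Z)$. *)

(* Complex scalars: C := R[i] for R : realType
   (mathcomp-real-closed's complex numbers, a numFieldType), so that a
   complex Banach space is a [completeNormedModType R[i]]. *)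
From mathcomp Require Import all_boot all_order all_algebra.
From mathcomp Require Import all_classical all_reals all_analysis.
From mathcomp.real_closed Require Import complex.
Import numFieldNormedType.Exports.
Import Order.TTheory GRing.Theory Num.Theory.

Set Implicit Arguments.
Unset Strict Implicit.
Unset Printing Implicit Defensive.

Local Open Scope classical_set_scope.
Local Open Scope ring_scope.

Section Defs.
Variable R : realType.
Local Notation C := R[i].
Variables X Z : completeNormedModType C.

Definition lin_subspace (D : set X) : Prop :=
  D 0 /\ (forall x y, D x -> D y -> D (x + y)) /\
  (forall (a : C) x, D x -> D (a *: x)).

Definition linear_on (D : set X) (A : X -> Z) : Prop :=
  forall (a : C) x y, D x -> D y -> A (a *: x + y) = a *: A x + A y.

Definition closed_operator (D : set X) (A : X -> Z) : Prop :=
  closed [set xz : X * Z | D xz.1 /\ xz.2 = A xz.1].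

Definition is_resolvent (D : set X) (E : X -> Z) (A : X -> Z) (l : C)
  (Rl : Z -> X) : Prop :=
  (forall z, D (Rl z) /\ l *: E (Rl z) - A (Rl z) = z) /\
  (forall x, D x -> Rl (l *: E x - A x) = x) /\
  (exists M : R, forall z, `|Rl z| <= (M%:C)%C * `|z|).

Definition in_resolvent_set (D : set X) (E A : X -> Z) (l : C) : Prop :=
  exists Rl, is_resolvent D E A l Rl.

Definition resolvent_bound (D : set X) (E A : X -> Z) (n : nat) : Prop :=
  exists (w c : R), 0 < c /\
    forall l : C, w < complex.Re l ->
      exists Rl, is_resolvent D E A l Rl /\
        forall z, `|Rl z| <= (c%:C)%C * `|l| ^ (n%:Z - 1) * `|z|.

Definition complex_resolvent_index (D : set X) (E A : X -> Z) (pres : nat)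
  : Prop :=
  resolvent_bound D E A pres /\
  forall n, resolvent_bound D E A n -> (pres <= n)%N.

End Defs.

(* Write Rs := (mu E - A)^-1, R_r := Rs E and R_l := E Rs.  The resolvent
   identities A Rs = mu R_l - 1 and Rs A = mu R_r - 1 (on dom A) make the
   statement purely algebraic.  On Z_ker the operator R_l is nilpotent, so
   1 - mu R_l is inverted by a finite Neumann series N, and A_ker^-1 := - Rs N.
   Both E A_ker^-1 and A_ker^-1 E satisfy T = mu L T - L for L = R_l resp. R_r,
   hence T lowers by one the least k with L^k v = 0, and T^p vanishes on
   ker L^p.  The resolvent index and the closedness and density of A are
   never used: the argument works for every p. *)

From HB Require Import structures.
From mathcomp Require Import all_boot all_order all_algebra.
From mathcomp Require Import all_classical all_reals all_analysis.
From mathcomp.real_closed Require Import complex.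
Import numFieldNormedType.Exports.
Import Order.TTheory GRing.Theory Num.Theory.
Local Open Scope classical_set_scope.
Local Open Scope ring_scope.

Set Implicit Arguments.
Unset Strict Implicit.
Unset Printing Implicit Defensive.

Lemma iter_comp_shift (T U : Type) (f : U -> T) (g : T -> U) n x :
  iter n (f \o g) (f x) = f (iter n (g \o f) x).
Proof. by elim: n => //= n ->. Qed.

Section IterLinear.
Variables (K : pzRingType) (V : lmodType K) (f : {linear V -> V}).

Lemma iter_is_linear n : linear (iter n f).
Proof. by elim: n => // n IH a u v /=; rewrite IH linearP. Qed.

HB.instance Definition _ n :=
  GRing.isLinear.Build K V V *:%R (iter n f) (iter_is_linear n).

Lemma iter_scale_fixed_eq0 (mu : K) n u :
  u = mu *: f u -> iter n f u = 0 -> u = 0.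
Proof.
move=> u_fix fnu0; suff -> : u = mu ^+ n *: iter n f u by rewrite fnu0 scaler0.
elim: n {fnu0} => [|n IH]; first by rewrite scale1r.
by rewrite exprSr -scalerA iterSr -linearZ -u_fix -IH.
Qed.

Lemma iter_ker_nilpotent (T : V -> V) (mu : K) p :
  (forall v, iter p f v = 0 -> iter p f (T v) = 0) ->
  (forall v, iter p f v = 0 -> T v = mu *: f (T v) - f v) ->
  forall v, iter p f v = 0 -> iter p T v = 0.
Proof.
move=> T_ker T_eq v v_ker.
have Tn_ker n : iter p f (iter n T v) = 0 by elim: n => //= n; apply: T_ker.
have lower m w : iter p f w = 0 -> iter m.+1 f w = 0 -> iter m f (T w) = 0.
  move=> w_ker fmw0; apply: (iter_scale_fixed_eq0 (mu := mu) (n := p)).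
    by rewrite {1}T_eq // linearB linearZ /= -!iterSr fmw0 subr0 iterS.
  by rewrite -iterD addnC iterD T_ker // linear0.
suff lowerT n : (n <= p)%N -> iter (p - n) f (iter n T v) = 0.
  by have := lowerT p (leqnn p); rewrite subnn.
elim: n => [_|n IH lt_np]; first by rewrite subn0.
by rewrite iterS lower ?Tn_ker // -subSn // subSS IH // ltnW.
Qed.

Definition neumann_sum (mu : K) n v := \sum_(i < n) mu ^+ i *: iter i f v.

Lemma neumann_sumK mu n v :
  neumann_sum mu n v - mu *: f (neumann_sum mu n v) = v - mu ^+ n *: iter n f v.
Proof.
rewrite /neumann_sum linear_sum scaler_sumr -sumrB.
under eq_bigr => i _ do rewrite [f _]linearZ /= scalerA -exprS -iterS -opprB.
have := telescope_sumr (fun i => mu ^+ i *: iter i f v) (leq0n n).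
by rewrite big_mkord expr0 scale1r sumrN => ->; rewrite opprB.
Qed.

Lemma neumann_sum_ker mu n p v :
  iter p f v = 0 -> iter p f (neumann_sum mu n v) = 0.
Proof.
move=> fpv0; rewrite linear_sum big1 //= => i _.
by rewrite [iter p f _]linearZ /= -iterD addnC iterD fpv0 linear0 scaler0.
Qed.

End IterLinear.

Section NeumannBound.
Variables (K : numDomainType) (V : normedModType K) (f : {linear V -> V}) (k : K).
Hypotheses (k_ge0 : 0 <= k) (f_le : forall v, `|f v| <= k * `|v|).

Lemma norm_iter_le n v : `|iter n f v| <= k ^+ n * `|v|.
Proof.
elim: n => [|n IH]; first by rewrite expr0 mul1r.
by rewrite iterS exprS -mulrA (le_trans (f_le _)) // ler_wpM2l.
Qed.

Lemma norm_neumann_sum_le mu n v :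
  `|neumann_sum f mu n v| <= (\sum_(i < n) (`|mu| * k) ^+ i) * `|v|.
Proof.
rewrite mulr_suml (le_trans (ler_norm_sum _ _ _)) // ler_sum // => i _.
by rewrite normrZ exprMn normrX -mulrA ler_wpM2l ?exprn_ge0 // norm_iter_le.
Qed.

End NeumannBound.

Section KernelInverse.
Variables (K : pzRingType) (V W : lmodType K).
Variables (E : {linear V -> W}) (Rs : {linear W -> V}) (mu : K) (p : nat).

Definition Aker_inv (z : W) : V := Rs (- neumann_sum (E \o Rs) mu p z).

Variables (D : set V) (A : V -> W).
Hypothesis Rs_dom : forall w, D (Rs w).
Hypothesis A_Rs : forall w, A (Rs w) = mu *: E (Rs w) - w.
Hypothesis Rs_A : forall x, D x -> Rs (A x) = mu *: Rs (E x) - x.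

Local Notation Xker x := (iter p (Rs \o E) x = 0).
Local Notation Zker z := (iter p (E \o Rs) z = 0).

Lemma resolvent_inj w : Rs w = 0 -> w = 0.
Proof.
move=> Rsw0; have := A_Rs w; rewrite Rsw0 linear0 scaler0 sub0r.
have := A_Rs 0; rewrite !linear0 scaler0 addr0 => -> /esym/eqP.
by rewrite oppr_eq0 => /eqP.
Qed.

Lemma Zker_E x : Xker x -> Zker (E x).
Proof. by move=> x_ker; rewrite iter_comp_shift x_ker linear0. Qed.

Lemma Zker_A x : D x -> Xker x -> Zker (A x).
Proof.
move=> Dx x_ker; apply: resolvent_inj.
rewrite -iter_comp_shift Rs_A // linearB linearZ /= -iterSr iterS x_ker.
by rewrite linear0 scaler0 subr0.
Qed.

Lemma Aker_inv_dom z : D (Aker_inv z).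
Proof. exact: Rs_dom. Qed.

Lemma Aker_invK z : Zker z -> A (Aker_inv z) = z.
Proof.
move=> z_ker; rewrite A_Rs !linearN scalerN opprK addrC.
by rewrite -[E (Rs _)]/((E \o Rs) _) neumann_sumK z_ker scaler0 subr0.
Qed.

Lemma Xker_Aker_inv z : Zker z -> Xker (Aker_inv z).
Proof.
move=> z_ker; rewrite iter_comp_shift linearN /= neumann_sum_ker //.
by rewrite oppr0 linear0.
Qed.

Lemma Aker_invE z : Zker z -> Aker_inv z = mu *: Rs (E (Aker_inv z)) - Rs z.
Proof.
move=> z_ker; have := Rs_A (Aker_inv_dom z); rewrite Aker_invK // => ->.
by rewrite opprB addrC subrK.
Qed.

Lemma Aker_inv_A x : D x -> Xker x -> Aker_inv (A x) = x.
Proof.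
move=> Dx x_ker; have Ax_ker := Zker_A Dx x_ker.
have := Aker_invE Ax_ker; have := Xker_Aker_inv Ax_ker.
move: (Aker_inv (A x)) => y y_ker y_eq; apply/eqP; rewrite -subr_eq0; apply/eqP.
apply: (iter_scale_fixed_eq0 (f := Rs \o E) (mu := mu) (n := p)).
  by rewrite /= !linearB scalerBr {1}y_eq Rs_A // opprB addrA addrAC addrK.
by rewrite linearB /= y_ker x_ker subrr.
Qed.

Lemma E_Aker_inv_nilpotent z : Zker z -> iter p (E \o Aker_inv) z = 0.
Proof.
apply: (iter_ker_nilpotent (f := E \o Rs) (mu := mu)) => v v_ker /=.
  exact/Zker_E/Xker_Aker_inv.
by rewrite {1}(Aker_invE v_ker) linearB linearZ.
Qed.

Lemma Aker_inv_E_nilpotent x : Xker x -> iter p (Aker_inv \o E) x = 0.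
Proof.
apply: (iter_ker_nilpotent (f := Rs \o E) (mu := mu)) => v v_ker /=.
  exact/Xker_Aker_inv/Zker_E.
exact/Aker_invE/Zker_E.
Qed.

End KernelInverse.

Lemma norm_Aker_inv_le (K : numDomainType) (V W : normedModType K)
    (E : {linear V -> W}) (Rs : {linear W -> V}) (mu : K) p (kE kR : K) :
  0 <= kE -> 0 <= kR ->
  (forall x, `|E x| <= kE * `|x|) -> (forall w, `|Rs w| <= kR * `|w|) ->
  forall z, `|Aker_inv E Rs mu p z| <=
    kR * (\sum_(i < p) (`|mu| * (kE * kR)) ^+ i) * `|z|.
Proof.
move=> kE_ge0 kR_ge0 E_le Rs_le z.
rewrite /Aker_inv -mulrA (le_trans (Rs_le _)) // normrN ler_wpM2l //.
apply: norm_neumann_sum_le; first exact: mulr_ge0.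
by move=> v /=; rewrite -mulrA (le_trans (E_le _)) // ler_wpM2l.
Qed.

Lemma resolvent_is_linear (R : realType) (X Z : completeNormedModType R[i])
    (E : {linear X -> Z}) (D : set X) (A : X -> Z) (l : R[i]) (Rs : Z -> X) :
  lin_subspace D -> linear_on D A -> is_resolvent D E A l Rs -> linear Rs.
Proof.
move=> [_ [DD DZ]] A_lin [Rs_right [Rs_left _]] a z w.
have [Dz Rz] := Rs_right z; have [Dw Rw] := Rs_right w.
rewrite -[RHS]Rs_left; last by apply: DD => //; apply: DZ.
congr Rs; rewrite A_lin // linearP scalerDr scalerA mulrC -scalerA opprD addrACA.
by rewrite -scalerBr Rz Rw.
Qed.

Lemma resolvent_identities (R : realType) (X Z : completeNormedModType R[i])
    (E : {linear X -> Z}) (D : set X) (A : X -> Z) (l : R[i]) (Rs : {linear Z -> X}) :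
  is_resolvent D E A l Rs ->
  [/\ forall w, D (Rs w), forall w, A (Rs w) = l *: E (Rs w) - w
    & forall x, D x -> Rs (A x) = l *: Rs (E x) - x].
Proof.
move=> [Rs_right [Rs_left _]]; split=> [w|w|x Dx]; first exact: (Rs_right w).1.
  by rewrite -{3}(Rs_right w).2 opprB addrC subrK.
by rewrite -{3}(Rs_left x Dx) linearB linearZ /= opprB addrC subrK.
Qed.

Lemma Aker_inv_bounded (R : realType) (X Z : normedModType R[i])
    (E : {linear X -> Z}) (Rs : {linear Z -> X}) (mu : R[i]) p :
  continuous E -> (exists M : R, forall w, `|Rs w| <= M%:C%C * `|w|) ->
  exists M : R, forall z, `|Aker_inv E Rs mu p z| <= M%:C%C * `|z|.
Proof.
move=> E_cont [MR Rs_le].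
have [kE /ltW kE_ge0 E_le] : exists2 k, 0 < k & forall x, `|E x| <= k * `|x|.
  exact/pinfty_ex_gt0/linear_boundedP/linear_bounded_continuous.
have kR_ge0 : 0 <= `|MR|%:C%C :> R[i] by rewrite ler0c.
have Rs_le' w : `|Rs w| <= `|MR|%:C%C * `|w|.
  by rewrite (le_trans (Rs_le w)) // ler_wpM2r // lecR ler_norm.
pose c := `|MR|%:C%C * \sum_(i < p) (`|mu| * (kE * `|MR|%:C%C)) ^+ i.
have c_ge0 : 0 <= c.
  by rewrite mulr_ge0 // sumr_ge0 // => i _; rewrite exprn_ge0 // !mulr_ge0.
exists (complex.Re c) => z; rewrite RRe_real ?ger0_real //.
exact: norm_Aker_inv_le kE_ge0 kR_ge0 E_le Rs_le' z.
Qed.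

Theorem lemma3p1 (R : realType) (X Z : completeNormedModType R[i])
  (E : {linear X -> Z}) (E_cont : continuous E)
  (D : set X) (A : X -> Z)
  (D_sub : lin_subspace D) (A_lin : linear_on D A)
  (A_closed : closed_operator D A) (D_dense : dense D)
  (pres : nat) (Hpres : complex_resolvent_index D E A pres)
  (mu : R[i]) (Rmu : Z -> X) (Hmu : is_resolvent D E A mu Rmu) :
  let p := pres.+1 in
  let Xker := [set x : X | iter p (Rmu \o E) x = 0] in
  let Zker := [set z : Z | iter p (E \o Rmu) z = 0] in
  (* A_ker is well defined: A maps dom(A) ∩ X_ker into Z_ker *)
  (forall x, D x -> Xker x -> Zker (A x)) /\
  (* E_ker = E|_{X_ker} maps X_ker into Z_ker *)
  (forall x, Xker x -> Zker (E x)) /\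
  (* A_ker has a bounded inverse Z_ker -> X_ker, which makes
     E_ker A_ker^{-1} and A_ker^{-1} E_ker nilpotent of degree <= p *)
  (exists Ainv : Z -> X,
     (forall z, Zker z -> D (Ainv z) /\ Xker (Ainv z) /\ A (Ainv z) = z) /\
     (forall x, D x -> Xker x -> Ainv (A x) = x) /\
     (exists M : R, forall z, Zker z -> `|Ainv z| <= (M%:C)%C * `|z|) /\
     (forall z, Zker z -> iter p (E \o Ainv) z = 0) /\
     (forall x, Xker x -> iter p (Ainv \o E) x = 0)).
Proof.
move=> p Xker Zker; rewrite {}/Xker {}/Zker.
pose Rs : {linear Z -> X} :=
  HB.pack Rmu (GRing.isLinear.Build _ _ _ _ Rmu (resolvent_is_linear D_sub A_lin Hmu)).
have Rs_res : is_resolvent D E A mu Rs := Hmu.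
have [Rs_dom A_Rs Rs_A] := resolvent_identities Rs_res.
change Rmu with (Rs : Z -> X).
split; first exact: Zker_A A_Rs Rs_A.
split; first exact: Zker_E.
exists (Aker_inv E Rs mu p); split.
  move=> z z_ker; split; first exact: Aker_inv_dom.
  by split; [exact: Xker_Aker_inv | exact: Aker_invK].
split; first exact: Aker_inv_A A_Rs Rs_A.
split.
  have [M M_le] := Aker_inv_bounded mu p E_cont Rs_res.2.2.
  by exists M => z _; exact: M_le.
split; first exact: E_Aker_inv_nilpotent Rs_dom A_Rs Rs_A.
exact: Aker_inv_E_nilpotent Rs_dom A_Rs Rs_A.
Qed.
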